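(* A topological space is an MG-space if and only if it is a quotient space of some locally Menger space.
   Context: A space $X$ is Menger if for each sequence $(\mathcal{U}_n)$ of open covers of $X$ there is a sequence $(\mathcal{V}_n)$ with each $\mathcal{V}_n$ a finite subset of $\mathcal{U}_n$ and $\bigcup_{n}\bigcup\mathcal{V}_n=X$. A space $X$ is locally Menger if for each $x\in X$ there exist an open set $U$ and a Menger subspace $Y$ of $X$ with $x\in U\subseteq Y$. A space $X$ is Menger generated (an MG-space) if a subset $U\subseteq X$ is open in $X$ whenever $U\cap M$ is open in $M$ for every Menger subspace $M$ of $X$. *)

From HB Require Import structures.
From mathcomp Require Import all_boot all_order.
From mathcomp Require Import all_classical topology.
Set Implicit Arguments. Unset Strict Implicit. Unset Printing Implicit Defensive.
Local Open Scope classical_set_scope.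

Definition relopen (X : topologicalType) (A V : set X) : Prop :=
  exists W : set X, open W /\ V = W `&` A.

Definition open_cover_of (X : topologicalType) (A : set X) (U : set (set X)) : Prop :=
  (forall V, U V -> relopen A V) /\ \bigcup_(V in U) V = A.

Definition Menger_subspace (X : topologicalType) (A : set X) : Prop :=
  forall U : nat -> set (set X), (forall n, open_cover_of A (U n)) ->
  exists V : nat -> set (set X),
    (forall n, finite_set (V n) /\ V n `<=` U n) /\
    \bigcup_n \bigcup_(W in V n) W = A.

Definition Menger (X : topologicalType) : Prop := Menger_subspace (@setT X).

Definition locally_Menger (X : topologicalType) : Prop :=
  forall x : X, exists (U Y : set X), open U /\ Menger_subspace Y /\ U x /\ U `<=` Y.

Definition MG_space (X : topologicalType) : Prop :=
  forall U : set X,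
    (forall M : set X, Menger_subspace M -> relopen M (U `&` M)) -> open U.

Definition quotient_map (Y X : topologicalType) (f : Y -> X) : Prop :=
  (forall x : X, exists y : Y, f y = x) /\
  (forall U : set X, open U <-> open (f @^-1` U)).

From HB Require Import structures.
From mathcomp Require Import all_boot all_classical topology.
Set Implicit Arguments. Unset Strict Implicit. Unset Printing Implicit Defensive.
Local Open Scope classical_set_scope.

(* The disjoint sum of all Menger subspaces of X is locally Menger, and its
   canonical map onto X is a quotient map precisely when X is Menger
   generated.  Conversely, continuous images of Menger subspaces are Menger;
   so if f : Y -> X is a quotient map with Y locally Menger and U meets every
   Menger subspace of X in a relatively open set, each y in f^-1 U has an open
   neighbourhood N inside a Menger set Z, the trace of U on the Menger set f Z
   is the trace of an open O, and N `&` f^-1 O is an open neighbourhood of y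
   inside f^-1 U. *)

Section relopen.
Variables (X : topologicalType) (A : set X).

Lemma relopen_id : relopen A A.
Proof. by exists setT; split; [exact: openT | rewrite setTI]. Qed.

Lemma relopen0 : relopen A set0.
Proof. by exists set0; split; [exact: open0 | rewrite set0I]. Qed.

Lemma relopenI U V : relopen A U -> relopen A V -> relopen A (U `&` V).
Proof.
move=> [O [oO ->]] [O' [oO' ->]]; exists (O `&` O'); split; first exact: openI.
by rewrite [RHS]setIIl.
Qed.

Lemma relopen_bigcup I (F : I -> set X) :
  (forall i, relopen A (F i)) -> relopen A (\bigcup_i F i).
Proof.
move=> /choice[O hO]; exists (\bigcup_i O i); split.
  by apply: bigcup_open => i _; case: (hO i).
by rewrite setI_bigcupl; apply: eq_bigcupr => i _; case: (hO i) => _ ->.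
Qed.

End relopen.

Lemma image_preimage_setI (T U : Type) (f : T -> U) (A : set T) (V : set U) :
  V `<=` f @` A -> f @` (f @^-1` V `&` A) = V.
Proof.
move=> sV; apply/seteqP; split=> [_ [a [Va _] <-] //|u Vu].
by have [a Aa fau] := sV u Vu; exists a => //; rewrite /= fau.
Qed.

Section Menger_image.
Variables (Y X : topologicalType) (g : Y -> X) (A : set Y).
Hypothesis g_cont : forall O, open O -> relopen A (g @^-1` O `&` A).

Lemma relopen_preimage V : relopen (g @` A) V -> relopen A (g @^-1` V `&` A).
Proof.
move=> [O [oO ->]]; rewrite preimage_setI -setIA (setIidr (@preimage_image _ _ g A)).
exact: g_cont.
Qed.

Lemma open_cover_preimage U :
  open_cover_of (g @` A) U -> open_cover_of A [set g @^-1` V `&` A | V in U].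
Proof.
move=> [hU cU]; split; first by move=> _ [V UV <-]; exact/relopen_preimage/hU.
rewrite bigcup_image -setI_bigcupl -preimage_bigcup cU.
exact/setIidr/(@preimage_image _ _ g A).
Qed.

Lemma Menger_subspace_image : Menger_subspace A -> Menger_subspace (g @` A).
Proof.
move=> mA U hU; have [V [hV cV]] := mA _ (fun n => open_cover_preimage (hU n)).
exists (fun n => [set g @` S | S in V n]); split.
- move=> n; split; first exact/finite_image/(hV n).1.
  move=> _ [S /(hV n).2 [W UW <-] <-]; rewrite image_preimage_setI //.
  by have [_ <-] := hU n => x Wx; exists W.
- under eq_bigcupr do rewrite bigcup_image -image_bigcup.
  by rewrite -image_bigcup cV.
Qed.

End Menger_image.

Lemma Menger_subspace1 (X : topologicalType) (x : X) : Menger_subspace [set x].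
Proof.
move=> U hU; have /choice[V hV] : forall n, exists V, U n V /\ V x.
  move=> n; have [_ cU] := hU n.
  have : (\bigcup_(V in U n) V) x by rewrite cU.
  by case=> V; exists V.
exists (fun n => [set V n]); split.
  by move=> n; split; [exact: finite_set1 | move=> W ->; case: (hV n)].
under eq_bigcupr do rewrite bigcup_set1.
apply/seteqP; split=> [y [n _ Vy]|y ->]; last by exists 0%N => //; case: (hV 0%N).
by have [_ <-] := hU n; exists (V n) => //; case: (hV n).
Qed.

Lemma MG_space_quotient (Y X : topologicalType) (f : Y -> X) :
  locally_Menger Y -> quotient_map f -> MG_space X.
Proof.
move=> hloc [_ hq] U hU; apply/hq; rewrite openE => y Uy.
have [N [Z [oN [mZ [Ny sNZ]]]]] := hloc y.
have mfZ : Menger_subspace (f @` Z).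
  by apply: Menger_subspace_image mZ => O /hq oO; exists (f @^-1` O).
have [O [/hq oO eO]] := hU _ mfZ.
rewrite /interior nbhsE /=; exists (N `&` f @^-1` O).
- split; first exact: openI.
  split=> //; have : (U `&` f @` Z) (f y).
    by split=> //; exists y => //; apply: sNZ.
  by rewrite eO => -[].
- move=> z [Nz Oz]; have : (O `&` f @` Z) (f z).
    by split=> //; exists z => //; apply: sNZ.
  by rewrite -eO => -[].
Qed.

Section Menger_sum.
Variable X : topologicalType.

(* A non-dependent model of the disjoint sum: the pairs (M, x) with M Menger
   and x in M form the summand {M} x M, all other pairs are isolated points. *)
Definition Menger_sum : Type := (set X * X)%type.
HB.instance Definition _ := Choice.on Menger_sum.

Definition Menger_sum_open (W : set Menger_sum) : Prop :=
  forall M, Menger_subspace M -> relopen M (pair M @^-1` W `&` M).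

Lemma Menger_sum_openT : Menger_sum_open setT.
Proof. by move=> M _; rewrite preimage_setT setTI; exact: relopen_id. Qed.

Lemma Menger_sum_openI : setI_closed Menger_sum_open.
Proof.
move=> W W' hW hW' M mM; rewrite preimage_setI setIIl.
by apply: relopenI; [exact: hW | exact: hW'].
Qed.

Lemma Menger_sum_open_bigcup I (F : I -> set Menger_sum) :
  (forall i, Menger_sum_open (F i)) -> Menger_sum_open (\bigcup_i F i).
Proof.
move=> hF M mM; rewrite preimage_bigcup setI_bigcupl.
by apply: relopen_bigcup => i; exact: hF.
Qed.

HB.instance Definition _ := isOpenTopological.Build Menger_sum
  Menger_sum_openT Menger_sum_openI Menger_sum_open_bigcup.

Lemma open_Menger_sumE W : open W <-> Menger_sum_open W.
Proof. by []. Qed.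

Definition summand (M : set X) : set Menger_sum := pair M @` M.

Lemma open_summand M : open (summand M).
Proof.
apply/open_Menger_sumE => M' _; have [->|neM] := pselect (M' = M).
  suff -> : pair M @^-1` summand M = M by rewrite setIid; exact: relopen_id.
  by apply/seteqP; split=> [z [a Ma [<-]] //|z Mz]; exists z.
suff -> : pair M' @^-1` summand M = set0 by rewrite set0I; exact: relopen0.
by apply/seteqP; split=> // z [_ _ [eM _]]; exact: neM.
Qed.

Lemma Menger_subspace_summand M : Menger_subspace M -> Menger_subspace (summand M).
Proof.
by move=> mM; apply: Menger_subspace_image (mM) => O /open_Menger_sumE; exact.
Qed.

Lemma open_isolated M x :
  ~ (Menger_subspace M /\ M x) -> open [set (M, x) : Menger_sum].
Proof.
move=> nMx; apply/open_Menger_sumE => M' mM'.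
suff -> : pair M' @^-1` [set (M, x)] `&` M' = set0 by exact: relopen0.
by apply/seteqP; split=> // z [[eM ez] Mz]; apply: nMx; rewrite -eM -ez.
Qed.

Lemma locally_Menger_sum : locally_Menger Menger_sum.
Proof.
case=> M x; have [[mM Mx]|nMx] := pselect (Menger_subspace M /\ M x).
  exists (summand M), (summand M); split; first exact: open_summand.
  by split; [exact: Menger_subspace_summand | split=> //; exists x].
exists [set (M, x)], [set (M, x)]; split; first exact: open_isolated.
by split; [exact: Menger_subspace1 | split].
Qed.

Lemma open_preimage_snd (U : set X) :
  open (snd @^-1` U : set Menger_sum) <->
  forall M, Menger_subspace M -> relopen M (U `&` M).
Proof. by []. Qed.

Lemma quotient_map_snd : MG_space X -> quotient_map (snd : Menger_sum -> X).
Proof.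
move=> hMG; split; first by move=> x; exists (set0, x).
by move=> U; rewrite open_preimage_snd; split; [move=> oU M _; exists U | exact: hMG].
Qed.

End Menger_sum.

Theorem theorem4p12 (X : topologicalType) :
  MG_space X <->
  exists (Y : topologicalType) (f : Y -> X), locally_Menger Y /\ quotient_map f.
Proof.
split=> [hMG | [Y [f [hloc hq]]]]; last exact: MG_space_quotient hloc hq.
exists (Menger_sum X), snd; split; first exact: locally_Menger_sum.
exact: quotient_map_snd.
Qed.
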